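(* There is a constant $C$ such that for every two NFAs $A$ and $B$, each with at most $n$ states and over a common alphabet of $m$ input letters, there exist two DFAs $A'$ and $B'$ with at most $C n^2$ states and over an alphabet of at most $C(m+n)$ letters such that, for every $r\ge 1$, there is a tower of height $r$ between $L(A)$ and $L(B)$ if and only if there is a tower of height $r$ between $L(A')$ and $L(B')$. In particular, there is an infinite tower between $L(A)$ and $L(B)$ if and only if there is an infinite tower between $L(A')$ and $L(B')$.
   Context: For strings $v=a_1\cdots a_k$ and $w$, $v\preccurlyeq w$ if $w\in\Sigma^*a_1\Sigma^*a_2\Sigma^*\cdots\Sigma^*a_k\Sigma^*$. A sequence $(w_i)_{i=1}^r$ of strings is a tower between languages $K$ and $L$ if $w_1\in K\cup L$ and for all $i=1,\dots,r-1$: $w_i\preccurlyeq w_{i+1}$, $w_i\in K$ implies $w_{i+1}\in L$, and $w_i\in L$ implies $w_{i+1}\in K$; $r$ is its height. An infinite tower is an infinite sequence with the same properties. *)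

From mathcomp Require Import all_boot.
Set Implicit Arguments. Unset Strict Implicit. Unset Printing Implicit Defensive.

Record nfa (m k : nat) := Nfa {
  nfa_init  : {set 'I_k};
  nfa_final : {set 'I_k};
  nfa_trans : 'I_k -> 'I_m -> {set 'I_k}
}.

Fixpoint nfa_run (m k : nat) (A : nfa m k) (S : {set 'I_k}) (w : seq 'I_m)
  : {set 'I_k} :=
  match w with
  | [::] => S
  | a :: w' => nfa_run A (\bigcup_(q in S) nfa_trans A q a) w'
  end.

Definition lang (m k : nat) (A : nfa m k) : pred (seq 'I_m) :=
  fun w => [exists q, (q \in nfa_run A (nfa_init A) w) && (q \in nfa_final A)].

(* A DFA is an NFA with at most one initial state and at most one successor
   per state and letter (possibly partial transition function). *)
Definition is_dfa (m k : nat) (A : nfa m k) : Prop :=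
  #|nfa_init A| <= 1 /\ forall q a, #|nfa_trans A q a| <= 1.

(* Subsequence order: v ≼ w is mathcomp's [subseq v w]. *)

(* (w_1, ..., w_r) = (w 0, ..., w (r-1)) is a tower of height r between K and L *)
Definition tower (T : eqType) (K L : pred (seq T)) (w : nat -> seq T) (r : nat)
  : Prop :=
  (K (w 0) \/ L (w 0)) /\
  forall i, i.+1 < r ->
    [/\ subseq (w i) (w i.+1),
        (K (w i) -> L (w i.+1)) &
        (L (w i) -> K (w i.+1))].

Definition inf_tower (T : eqType) (K L : pred (seq T)) (w : nat -> seq T) : Prop :=
  (K (w 0) \/ L (w 0)) /\
  forall i,
    [/\ subseq (w i) (w i.+1),
        (K (w i) -> L (w i.+1)) &
        (L (w i) -> K (w i.+1))].

(* A word over the letters and the states of an NFA A can spell out an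
   accepting run of A: before each letter of the input it announces the state
   reached after reading it.  A DFA whose states are pairs (last confirmed state,
   announced state) checks such annotated words, so projecting its language to
   the original letters gives exactly L(A); moreover any annotated word whose
   projection is a subsequence of a word of L(A) extends, by inserting letters,
   to an accepted annotated word projecting onto it.  The projection is monotone
   for the subsequence order, so chains of words alternating between the two
   languages can be transported in both directions, and towers are, up to a
   degenerate constant case, such alternating chains. *)
From Stdlib Require Import Classical ClassicalEpsilon.
From mathcomp Require Import all_boot zify.
Set Implicit Arguments. Unset Strict Implicit. Unset Printing Implicit Defensive.

Section Towers.
Variables (T : eqType) (K L : pred (seq T)) (D : nat -> bool).
Hypotheses (D0 : D 0) (D_down : forall i, D i.+1 -> D i).

(* [D] is the set of admissible indices: [i < r] for a tower of height [r],
   all of [nat] for an infinite tower. *)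
Definition tower_on (w : nat -> seq T) : Prop :=
  (K (w 0) \/ L (w 0)) /\
  forall i, D i.+1 ->
    [/\ subseq (w i) (w i.+1), (K (w i) -> L (w i.+1)) & (L (w i) -> K (w i.+1))].

Definition alt_lang (b : bool) (i : nat) : pred (seq T) :=
  if odd i (+) b then L else K.

Definition alt_chain (b : bool) (w : nat -> seq T) : Prop :=
  (forall i, D i -> alt_lang b i (w i)) /\
  (forall i, D i.+1 -> subseq (w i) (w i.+1)).

Lemma tower_on_alt_chain w : tower_on w -> alt_chain (~~ K (w 0)) w.
Proof.
case=> w0KL w_step; split; last by move=> i /w_step [].
elim=> [|i IHi] Di.
  rewrite /alt_lang /=; case: (boolP (K (w 0))) => //= nKw0.
  by case: w0KL => // Kw0; case/negP: nKw0.
have [_ KL LK] := w_step i Di; move: (IHi (D_down Di)).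
by rewrite /alt_lang /= addNb; case: (odd i (+) _); auto.
Qed.

(* If some word of the chain lies in both languages, the constant sequence on it
   is a tower; otherwise the chain itself is one. *)
Lemma alt_chain_tower_on b w : alt_chain b w -> exists w', tower_on w'.
Proof.
case=> w_alt w_sub.
have [[j [Dj Kwj Lwj]]|noKL] := classic (exists j, [/\ D j, K (w j) & L (w j)]).
  by exists (fun=> w j); split; [left | split; rewrite ?subseq_refl].
exists w; split; first by move: (w_alt 0 D0); rewrite /alt_lang; case: ifP; auto.
move=> i Di; move: (w_alt i (D_down Di)) (w_alt i.+1 Di).
rewrite /alt_lang /= addNb.
case: (odd i (+) b) => /= wi wi1; split=> //; try exact: w_sub;
  by move=> w'i; case: noKL; exists i; split=> //; apply: D_down.
Qed.

Lemma exists_tower_onE :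
  (exists w, tower_on w) <-> (exists b w, alt_chain b w).
Proof.
split=> [[w /tower_on_alt_chain]|[b [w /alt_chain_tower_on]]] //.
by exists (~~ K (w 0)), w.
Qed.

End Towers.

Lemma exists_inf_towerE (T : eqType) (K L : pred (seq T)) :
  (exists w, inf_tower K L w) <-> (exists w, tower_on K L (fun=> true) w).
Proof. by split=> -[w [w0 w_step]]; exists w; split=> // i; apply: w_step. Qed.

Section ProjectTowers.
Variables (T T' : eqType) (pi : seq T' -> seq T).
Hypotheses (pi_nil : pi [::] = [::])
  (pi_subseq : forall u v, subseq u v -> subseq (pi u) (pi v)).

Definition projects (K' : pred (seq T')) (K : pred (seq T)) : Prop :=
  (forall u, K' u -> K (pi u)) /\
  (forall v u, K v -> subseq (pi u) v -> exists u', [/\ subseq u u', pi u' = v & K' u']).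

Variables (K L : pred (seq T)) (K' L' : pred (seq T')).
Hypotheses (projK : projects K' K) (projL : projects L' L).

Lemma projects_alt_lang b i : projects (alt_lang K' L' b i) (alt_lang K L b i).
Proof. by rewrite /alt_lang; case: ifP. Qed.

Variable D : nat -> bool.
Hypotheses (D0 : D 0) (D_down : forall i, D i.+1 -> D i).

Lemma alt_chain_project b w :
  alt_chain K' L' D b w -> alt_chain K L D b (fun i => pi (w i)).
Proof.
case=> w_alt w_sub; split=> i Di; last exact/pi_subseq/w_sub.
by have [proj _] := projects_alt_lang b i; apply/proj/w_alt.
Qed.

Definition lift_chain (P : nat -> pred (seq T')) (w : nat -> seq T) :=
  fix lifted i := epsilon (inhabits [::]) (fun u' =>
    [/\ subseq (if i is j.+1 then lifted j else [::]) u', pi u' = w i & P i u']).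

Lemma alt_chain_lift b w :
  alt_chain K L D b w -> alt_chain K' L' D b (lift_chain (alt_lang K' L' b) w).
Proof.
case=> w_alt w_sub; set w' := lift_chain _ w.
have w'_spec i : D i ->
    [/\ subseq (if i is j.+1 then w' j else [::]) (w' i),
        pi (w' i) = w i & alt_lang K' L' b i (w' i)].
  have [_ lift] := projects_alt_lang b i.
  elim: i lift => [|i IHi] lift Di.
    by apply: (epsilon_spec _ _ (lift _ _ (w_alt _ Di) _)); rewrite pi_nil sub0seq.
  have [_ w'i _] := IHi (projects_alt_lang b i).2 (D_down Di).
  by apply: (epsilon_spec _ _ (lift _ _ (w_alt _ Di) _)); rewrite w'i; apply: w_sub.
split=> i Di; first by have [] := w'_spec i Di.
by have [] := w'_spec i.+1 Di.
Qed.

Lemma exists_tower_on_project :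
  (exists w, tower_on K L D w) <-> (exists w, tower_on K' L' D w).
Proof.
rewrite !exists_tower_onE //; split=> -[b [w chain]]; exists b.
  by eexists; apply: alt_chain_lift chain.
by eexists; apply: alt_chain_project chain.
Qed.

End ProjectTowers.

Lemma is_dfa_nfa0 (m : nat) (A : nfa m 0) : is_dfa A.
Proof. by split=> [|q a]; rewrite (leq_trans (max_card _)) // card_ord. Qed.

Section NFARuns.
Variables (m k : nat) (A : nfa m k).

Lemma nfa_run_bigcup S w : nfa_run A S w = \bigcup_(p in S) nfa_run A [set p] w.
Proof.
elim: w S => [|a w IHw] S /=.
  apply/setP=> q; apply/idP/bigcupP => [Sq|[p Sp /set1P -> //]].
  by exists q; rewrite ?set11.
rewrite IHw; apply/setP=> q.
apply/bigcupP/bigcupP => [[p /bigcupP [p' Sp' p'p] qp]|[p' Sp']].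
  by exists p' => //; rewrite big_set1 IHw; apply/bigcupP; exists p.
by rewrite big_set1 IHw => /bigcupP [p p'p qp]; exists p => //; apply/bigcupP; exists p'.
Qed.

Lemma nfa_run_set0 w : nfa_run A set0 w = set0.
Proof. by rewrite nfa_run_bigcup big_set0. Qed.

Definition accepts_from (S : {set 'I_k}) (w : seq 'I_m) : bool :=
  [exists q, (q \in nfa_run A S w) && (q \in nfa_final A)].

Lemma accepts_from_cons S a w :
  accepts_from S (a :: w) = [exists p in nfa_run A S [:: a], accepts_from [set p] w].
Proof.
rewrite /accepts_from /=; apply/existsP/exists_inP.
  case=> q /andP [/[!nfa_run_bigcup] /bigcupP [p Sp qp] Fq].
  by exists p => //; apply/existsP; exists q; rewrite qp.
case=> p Sp /existsP [q /andP [qp Fq]]; exists q; rewrite Fq andbT nfa_run_bigcup.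
by apply/bigcupP; exists p.
Qed.

End NFARuns.

Section PartialDFA.
Variables (m : nat) (S : finType) (delta : S -> 'I_m -> option S).

Fixpoint prun (s : S) (u : seq 'I_m) : option S :=
  if u is c :: u' then obind (prun^~ u') (delta s c) else Some s.

Lemma prun_cat s u1 u2 : prun s (u1 ++ u2) = obind (prun^~ u2) (prun s u1).
Proof. by elim: u1 s => //= c u1 IHu s; case: (delta s c). Qed.

Variables (s0 : S) (F : pred S).

Definition pdfa_nfa : nfa m #|S| :=
  Nfa [set enum_rank s0] [set i | F (enum_val i)]
      (fun i c => if delta (enum_val i) c is Some s then [set enum_rank s] else set0).

Lemma pdfa_nfa_is_dfa : is_dfa pdfa_nfa.
Proof.
split=> [|i c] /=; first by rewrite cards1.
by case: (delta _ c) => [s|]; rewrite ?cards1 ?cards0.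
Qed.

Lemma nfa_run_pdfa_nfa s u :
  nfa_run pdfa_nfa [set enum_rank s] u =
  if prun s u is Some s' then [set enum_rank s'] else set0.
Proof.
elim: u s => //= c u IHu s; rewrite big_set1 enum_rankK.
by case: (delta s c) => [s'|] //=; rewrite nfa_run_set0.
Qed.

Lemma lang_pdfa_nfa u : lang pdfa_nfa u = oapp F false (prun s0 u).
Proof.
rewrite /lang nfa_run_pdfa_nfa; case: (prun s0 u) => [s|] /=.
  apply/existsP/idP => [[i /andP [/set1P -> ]]|Fs]; first by rewrite inE enum_rankK.
  by exists (enum_rank s); rewrite set11 inE enum_rankK.
by apply/existsP => -[i]; rewrite inE.
Qed.

End PartialDFA.

Section PmapSubseq.
Variables (T U : eqType) (f : T -> option U).

Lemma subseq_pmap u v : subseq u v -> subseq (pmap f u) (pmap f v).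
Proof.
elim: v u => [|c v IHv] [|d u] //=; first by rewrite sub0seq.
case: eqP => [-> /IHv|_ /IHv uv]; first by case: (f c) => //= a; rewrite eqxx.
by apply: (subseq_trans uv); case: (f c) => //= a; apply: subseq_cons.
Qed.

(* [c0] is the inserted preimage of [a] when [u] has none to offer. *)
Lemma subseq_pmap_cons c0 a u w :
  f c0 = Some a -> subseq (pmap f u) (a :: w) ->
  exists u1 c u2,
    [/\ pmap f u1 = [::], f c = Some a, subseq u (u1 ++ c :: u2) & subseq (pmap f u2) w].
Proof.
move=> fc0; elim: u => [_|d u IHu] /=; first by exists [::], c0, [::]; split; rewrite ?sub0seq.
case fd: (f d) => [b|]; last first.
  case/IHu=> u1 [c [u2 [u1E fc uu u2w]]].
  by exists (d :: u1), c, u2; split; rewrite //= ?fd ?u1E ?eqxx.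
rewrite /=; case: eqP => [ba uw|_ duw].
  by exists [::], d, u; split; rewrite //= ?fd ?ba ?eqxx.
by exists [::], c0, (d :: u); split; [| |exact: subseq_cons|rewrite /= fd].
Qed.

End PmapSubseq.

Section GuessAutomaton.
Variables (m n k : nat) (A : nfa m k).

(* The alphabet ['I_(m + n)] consists of the [m] letters of [A] followed by [n]
   state letters; [letters] erases the state letters. *)
Definition letter_of (c : 'I_(m + n)) : option 'I_m :=
  if split c is inl a then Some a else None.

Definition letters (u : seq 'I_(m + n)) : seq 'I_m := pmap letter_of u.

Lemma letter_of_lshift a : letter_of (lshift n a) = Some a.
Proof. by rewrite /letter_of (unsplitK (inl _ a)). Qed.

Lemma split_letter_of c a : letter_of c = Some a -> split c = inl a.
Proof. by rewrite /letter_of; case: (split c) => // _ [->]. Qed.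

(* A state [(x, y)] records the last confirmed state [x] of [A] ([None] before
   the first letter) and the announced next state [y]; state letters [p >= k]
   cancel the announcement. *)
Definition guess_state := (option 'I_k * option 'I_k)%type.

Definition current_set (x : option 'I_k) : {set 'I_k} :=
  if x is Some q then [set q] else nfa_init A.

Definition guess_step (s : guess_state) (c : 'I_(m + n)) : option guess_state :=
  match split c, s.2 with
  | inr p, _ => Some (s.1, insub (val p))
  | inl a, Some p =>
      if p \in nfa_run A (current_set s.1) [:: a] then Some (Some p, None) else None
  | inl _, None => None
  end.

Definition guess_final (s : guess_state) : bool := accepts_from A (current_set s.1) [::].

Definition guess_accepts (s : guess_state) (u : seq 'I_(m + n)) : bool :=
  oapp guess_final false (prun guess_step s u).

Definition guess_dfa : nfa (m + n) #|{: guess_state}| :=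
  pdfa_nfa guess_step (None, None) guess_final.

Lemma card_guess_state : #|{: guess_state}| = k.+1 * k.+1.
Proof. by rewrite card_prod card_option card_ord. Qed.

Lemma guess_accepts_sound x y u :
  guess_accepts (x, y) u -> accepts_from A (current_set x) (letters u).
Proof.
rewrite /guess_accepts; elim: u x y => // c u IHu x y.
rewrite /letters /= /letter_of /guess_step /=; case: (split c) => [a|p] /=; last exact: IHu.
case: y => [p|] //; case: ifP => // xp /IHu accp.
by rewrite accepts_from_cons; apply/exists_inP; exists p.
Qed.

Lemma prun_state_letters x y u :
  letters u = [::] -> exists y', prun guess_step (x, y) u = Some (x, y').
Proof.
elim: u y => [|c u IHu] y; first by exists y.
rewrite /letters /= /letter_of /guess_step /=; case: (split c) => //= p.
exact: IHu.
Qed.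

Hypothesis k_le_n : k <= n.

Definition state_letter (p : 'I_k) : 'I_(m + n) := rshift m (widen_ord k_le_n p).

Lemma split_state_letter p : split (state_letter p) = inr (widen_ord k_le_n p).
Proof. exact: (unsplitK (inr _ _)). Qed.

Lemma letter_of_state_letter p : letter_of (state_letter p) = None.
Proof. by rewrite /letter_of split_state_letter. Qed.

Lemma prun_announce x y p c a u :
  p \in nfa_run A (current_set x) [:: a] -> letter_of c = Some a ->
  prun guess_step (x, y) (state_letter p :: c :: u) = prun guess_step (Some p, None) u.
Proof.
move=> xp /split_letter_of ca.
by rewrite /= /guess_step split_state_letter /= valK ca /= xp.
Qed.

Lemma guess_accepts_lift x y u w :
  accepts_from A (current_set x) w -> subseq (letters u) w ->
  exists u', [/\ subseq u u', letters u' = w & guess_accepts (x, y) u'].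
Proof.
elim: w x y u => [|a w IHw] x y u.
  move=> accx; rewrite subseq0 => /eqP u0; exists u; split=> //.
  by rewrite /guess_accepts; have [y' ->] := prun_state_letters x y u0.
rewrite accepts_from_cons => /exists_inP [p xp accp].
case/(subseq_pmap_cons (letter_of_lshift a)) => u1 [c [u2 [u1E ca uu u2w]]].
have [u'' [u2u'' u''E accu'']] := IHw (Some p) None u2 accp u2w.
exists (u1 ++ state_letter p :: c :: u''); split.
- apply: (subseq_trans uu); apply: cat_subseq => //.
  by apply: (subseq_trans _ (subseq_cons _ _)); rewrite /= eqxx.
- by rewrite /letters pmap_cat u1E /= (letter_of_state_letter p) ca -u''E.
- have [y' u1run] := prun_state_letters x y u1E.
  rewrite /guess_accepts prun_cat u1run.
  by have /= -> := prun_announce y' u'' xp ca.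
Qed.

End GuessAutomaton.

Lemma projects_guess_dfa (m n k : nat) (A : nfa m k) :
  k <= n -> projects (@letters m n) (lang (guess_dfa n A)) (lang A).
Proof.
move=> k_le_n; split=> [u|w u Aw uw]; first by rewrite lang_pdfa_nfa; apply: guess_accepts_sound.
have [u' [uu' u'w accu']] := guess_accepts_lift k_le_n (x := None) None Aw uw.
by exists u'; rewrite lang_pdfa_nfa.
Qed.

Theorem theorem12 :
  exists C : nat,
  forall (m n kA kB : nat) (A : nfa m kA) (B : nfa m kB),
    kA <= n -> kB <= n ->
    exists (m' kA' kB' : nat) (A' : nfa m' kA') (B' : nfa m' kB'),
      is_dfa A' /\ is_dfa B' /\
          kA' <= C * n ^ 2 /\ kB' <= C * n ^ 2 /\
          m' <= C * (m + n) /\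
          (forall r : nat, 1 <= r ->
             (exists w, tower (lang A) (lang B) w r) <->
             (exists w, tower (lang A') (lang B') w r)) /\
          ((exists w, inf_tower (lang A) (lang B) w) <->
           (exists w, inf_tower (lang A') (lang B') w)).
Proof.
exists 4 => m [|n] kA kB A B kA_le_n kB_le_n.
  case: kA A kA_le_n => // A _; case: kB B kB_le_n => // B _.
  exists m, 0, 0, A, B; do 2![split; first exact: is_dfa_nfa0].
  by do 3![split; first lia]; split.
exists (m + n.+1), _, _, (guess_dfa n.+1 A), (guess_dfa n.+1 B).
do 2![split; first exact: pdfa_nfa_is_dfa].
do 3![split; first by rewrite ?card_guess_state; nia].
have transfer D := exists_tower_on_project (erefl : letters [::] = [::]) (@subseq_pmap _ _ _)
  (projects_guess_dfa A kA_le_n) (projects_guess_dfa B kB_le_n) (D := D).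
split=> [r r_gt0|]; first exact: (transfer (fun i => i < r) r_gt0 (fun i => @ltnW i.+1 r)).
by rewrite !exists_inf_towerE; apply: transfer.
Qed.
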